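(* Let $p$ be a prime and let $G\cong C_{p^2}\times C_p$ be the non-cyclic metacyclic abelian group of order $p^3$. Then there exist at least $p+1$ pairwise non-isomorphic local nearrings whose additive group is isomorphic to $G$.
   Context: A (left) nearring is a set $R$ with two binary operations $+$ and $\cdot$ such that $(R,+)$ is a group with neutral element $0$, $(R,\cdot)$ is a semigroup, and $x\cdot(y+z)=x\cdot y+x\cdot z$ for all $x,y,z\in R$. A nearring with identity is one where $(R,\cdot)$ is a monoid. A nearring $R$ with identity is called local if the set $L$ of all non-invertible elements of $(R,\cdot)$ is a subgroup of $(R,+)$. The additive group of $R$ is $(R,+)$. Two nearrings are isomorphic if there is a bijection preserving both operations. *)

From mathcomp Require Import all_boot all_order all_algebra.
Set Implicit Arguments. Unset Strict Implicit. Unset Printing Implicit Defensive.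
Import GRing.Theory.
Local Open Scope ring_scope.

Record nearring := NearRing {
  nr_car :> Type;
  nr_add : nr_car -> nr_car -> nr_car;
  nr_zero : nr_car;
  nr_opp : nr_car -> nr_car;
  nr_mul : nr_car -> nr_car -> nr_car;
  nr_one : nr_car;
  nr_addA : forall x y z, nr_add x (nr_add y z) = nr_add (nr_add x y) z;
  nr_add0r : forall x, nr_add nr_zero x = x;
  nr_addr0 : forall x, nr_add x nr_zero = x;
  nr_addNr : forall x, nr_add (nr_opp x) x = nr_zero;
  nr_addrN : forall x, nr_add x (nr_opp x) = nr_zero;
  nr_mulA : forall x y z, nr_mul x (nr_mul y z) = nr_mul (nr_mul x y) z;
  nr_mul1r : forall x, nr_mul nr_one x = x;
  nr_mulr1 : forall x, nr_mul x nr_one = x;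
  nr_mulDr : forall x y z, nr_mul x (nr_add y z) = nr_add (nr_mul x y) (nr_mul x z)
}.

Definition nr_unit (R : nearring) (x : R) : Prop :=
  exists y : R, nr_mul x y = nr_one R /\ nr_mul y x = nr_one R.

Definition nr_local (R : nearring) : Prop :=
  let L := fun x : R => ~ nr_unit x in
  [/\ L (nr_zero R),
      (forall x y, L x -> L y -> L (nr_add x y)) &
      (forall x, L x -> L (nr_opp x))].

Definition nr_additive_iso (R : nearring) (A : zmodType) : Prop :=
  exists f : R -> A, bijective f /\ forall x y, f (nr_add x y) = f x + f y.

Definition nr_isomorphic (R S : nearring) : Prop :=
  exists f : R -> S, bijective f /\
    (forall x y, f (nr_add x y) = nr_add (f x) (f y)) /\
    (forall x y, f (nr_mul x y) = nr_mul (f x) (f y)).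

Definition Cp2xCp (p : nat) : zmodType := ('Z_(p ^ 2) * 'Z_p)%type.

From HB Require Import structures.
From mathcomp Require Import all_boot all_order all_algebra.
From mathcomp Require Import ring zify.
Set Implicit Arguments. Unset Strict Implicit. Unset Printing Implicit Defensive.
Import GRing.Theory.
Local Open Scope ring_scope.

(* On Z_{p^2} x Z_p put, for t in Z_p and k in N,
     (a, b) (c, d) = (a c + p (t b d), b c' + a'^k d),
   where a' is the reduction of a mod p and p (-) embeds Z_p as p Z_{p^2}.  Left
   distributivity is clear; associativity compares the cross terms t (a' d f) and
   t (a'^k d f), so it holds when t = 0 or k = 1.  Since reduction of the first coordinate
   is multiplicative, the units are exactly the elements with a' <> 0, whose complement
   is a subgroup: the nearring is local.  The parameters (t, k) = (0, i) for i < p and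
   (1, 1) give p + 1 such nearrings, separated by three isomorphism invariants:
   0 y = 0 for all y iff k > 0; two p-torsion elements can have a nonzero product iff
   t <> 0; and multiples n 1 of the identity act on p-torsion elements w as
   n 1 w = n^k w modulo p R, which detects k < p because distinct exponents below p
   define distinct power maps on F_p (there are only j - i roots of x^(j-i) = 1). *)

Definition nr_muln (R : nearring) (x : R) (n : nat) : R :=
  iter n (nr_add x) (nr_zero R).

Lemma nr_addI_eq0 (R : nearring) (a : R) : nr_add a a = a -> a = nr_zero R.
Proof. by move=> aa; rewrite -[a]nr_add0r -(nr_addNr a) -nr_addA aa. Qed.

Lemma nr_add_eq0_opp (R : nearring) (a b : R) :
  nr_add b a = nr_zero R -> b = nr_opp a.
Proof. by move=> ba; rewrite -[b]nr_addr0 -(nr_addrN a) nr_addA ba nr_add0r. Qed.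

Section NearringMorphism.

Variables (R S : nearring) (f : R -> S).
Hypotheses (f_bij : bijective f)
  (fD : forall x y, f (nr_add x y) = nr_add (f x) (f y))
  (fM : forall x y, f (nr_mul x y) = nr_mul (f x) (f y)).

Lemma nr_morph0 : f (nr_zero R) = nr_zero S.
Proof. by apply: nr_addI_eq0; rewrite -fD nr_add0r. Qed.

Lemma nr_morphN x : f (nr_opp x) = nr_opp (f x).
Proof. by apply: nr_add_eq0_opp; rewrite -fD nr_addNr nr_morph0. Qed.

Lemma nr_morph_muln x n : f (nr_muln x n) = nr_muln (f x) n.
Proof. by elim: n => [|n IHn] /=; rewrite ?nr_morph0 // fD IHn. Qed.

Lemma nr_morph1 : f (nr_one R) = nr_one S.
Proof.
have [g _ gK] := f_bij.
have f1M y : nr_mul (f (nr_one R)) y = y by rewrite -[y]gK -fM nr_mul1r.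
by rewrite -[LHS]nr_mulr1 f1M.
Qed.

End NearringMorphism.

Lemma nr_isomorphic_sym (R S : nearring) : nr_isomorphic R S -> nr_isomorphic S R.
Proof.
case=> f [[g fK gK] [fD fM]]; exists g; split; first by exists f.
by split=> x y; apply: (can_inj fK); rewrite ?fD ?fM !gK.
Qed.

Definition zero_symmetric (R : nearring) : Prop :=
  forall y : R, nr_mul (nr_zero R) y = nr_zero R.

Definition torsion_product_neq0 (R : nearring) (p : nat) : Prop :=
  exists x y : R, [/\ nr_muln x p = nr_zero R, nr_muln y p = nr_zero R
                    & nr_mul x y <> nr_zero R].

Definition torsion_pow_action (R : nearring) (p k : nat) : Prop :=
  forall (n : nat) (w : R), nr_muln w p = nr_zero R ->
  exists z : R,
    nr_add (nr_mul (nr_muln (nr_one R) n) w) (nr_opp (nr_muln w (n ^ k)%N))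
    = nr_muln z p.

Section IsomorphismInvariants.

Variables (R S : nearring).
Hypothesis iso_RS : nr_isomorphic R S.

Lemma zero_symmetric_iso : zero_symmetric R -> zero_symmetric S.
Proof.
have [f [[g _ gK] [fD fM]]] := iso_RS; move=> zsR y.
by rewrite -[y]gK -(nr_morph0 fD) -fM zsR.
Qed.

Lemma torsion_product_neq0_iso p :
  torsion_product_neq0 R p -> torsion_product_neq0 S p.
Proof.
have [f [f_bij [fD fM]]] := iso_RS; case=> x [y [px py xy]].
exists (f x), (f y); rewrite -!(nr_morph_muln fD) px py -fM (nr_morph0 fD).
by split=> //; rewrite -(nr_morph0 fD) => /(bij_inj f_bij).
Qed.

Lemma torsion_pow_action_iso p k :
  torsion_pow_action R p k -> torsion_pow_action S p k.
Proof.
have [f [f_bij [fD fM]]] := iso_RS; have [g _ gK] := f_bij.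
move=> actR n w pw; have pgw : nr_muln (g w) p = nr_zero R.
  by apply: (bij_inj f_bij); rewrite (nr_morph_muln fD) gK pw (nr_morph0 fD).
have [z zE] := actR n _ pgw; exists (f z).
rewrite -(nr_morph_muln fD) -zE fD (nr_morphN fD) fM !(nr_morph_muln fD).
by rewrite (nr_morph1 f_bij fM) gK.
Qed.

End IsomorphismInvariants.

Lemma Zp_natr_eq0 q m : (1 < q)%N -> ((m%:R : 'Z_q) == 0) = (q %| m)%N.
Proof. by move=> q_gt1; rewrite -val_eqE /= val_Zp_nat. Qed.

Lemma Zp_unit p (x : 'Z_p) : prime p -> x != 0 -> x \is a GRing.unit.
Proof.
move=> p_pr; rewrite -[x]natr_Zp Zp_natr_eq0 ?prime_gt1 //.
by rewrite unitZpE ?prime_gt1 // prime_coprime.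
Qed.

(* ['Z_q] is ['Z_2] when [q <= 1], so reduction is a ring morphism for every [p]. *)
Lemma Zp_trunc_dvd p : ((Zp_trunc p).+2 %| (Zp_trunc (p ^ 2)).+2)%N.
Proof.
have [p_gt1|] := ltnP 1 p; last by case: p => [|[]].
by rewrite !Zp_cast ?dvdn_exp // (ltn_exp2l 0).
Qed.

Definition redp p (a : 'Z_(p ^ 2)) : 'Z_p := (a : nat)%:R.
Arguments redp : clear implicits.

Lemma redp_nat p m : redp p m%:R = m%:R.
Proof.
by apply: val_inj; rewrite /redp /= !Zp_nat /= modn_dvdm // Zp_trunc_dvd.
Qed.

Section ReductionMorphism.

Variable p : nat.

Fact redp_is_nmod_morphism : nmod_morphism (redp p).
Proof.
split=> [|a b]; first exact: (redp_nat p 0).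
by rewrite -[a]natr_Zp -[b]natr_Zp -natrD !redp_nat natrD.
Qed.

Fact redp_is_monoid_morphism : monoid_morphism (redp p).
Proof.
split=> [|a b]; first exact: (redp_nat p 1).
by rewrite -[a]natr_Zp -[b]natr_Zp -natrM !redp_nat natrM.
Qed.

HB.instance Definition _ :=
  GRing.isNmodMorphism.Build _ _ (redp p) redp_is_nmod_morphism.
HB.instance Definition _ :=
  GRing.isMonoidMorphism.Build _ _ (redp p) redp_is_monoid_morphism.

End ReductionMorphism.

Definition embp p (u : 'Z_p) : 'Z_(p ^ 2) := (u : nat)%:R *+ p.
Arguments embp : clear implicits.

Lemma embp0 p : embp p 0 = 0.
Proof. by rewrite /embp mul0rn. Qed.

Section PrimeModulus.

Variable p : nat.
Hypothesis p_pr : prime p.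

Let p_gt1 : (1 < p)%N. Proof. exact: prime_gt1. Qed.
Let p2_gt1 : (1 < p ^ 2)%N. Proof. by rewrite (ltn_exp2l 0). Qed.

Lemma redp_unit a : redp p a != 0 -> a \is a GRing.unit.
Proof.
rewrite /redp Zp_natr_eq0 // => p_ndvd_a.
by rewrite -[a]natr_Zp unitZpE // coprime_pexpl // prime_coprime.
Qed.

Lemma redp_torsion a : a *+ p = 0 -> redp p a = 0.
Proof.
rewrite -[a]natr_Zp -mulrnA => /eqP; rewrite Zp_natr_eq0 // => p2_dvd.
apply/eqP; rewrite /redp natr_Zp Zp_natr_eq0 //.
by rewrite -(@dvdn_pmul2r p) ?prime_gt0 // -mulnn.
Qed.

Lemma embp_nat m : embp p m%:R = (m * p)%:R.
Proof.
rewrite /embp val_Zp_nat // -mulrnA [in RHS](divn_eq m p) mulnDl natrD.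
by rewrite -mulnA mulnn natrM pchar_Zp // mulr0 add0r.
Qed.

Lemma redp_eq0 a : redp p a = 0 -> {u | a = embp p u}.
Proof.
move/eqP; rewrite /redp Zp_natr_eq0 // => /divnK aE.
by exists (a %/ p)%:R; rewrite embp_nat aE natr_Zp.
Qed.

Lemma embpD u v : embp p (u + v) = embp p u + embp p v.
Proof. by rewrite -[u]natr_Zp -[v]natr_Zp -natrD !embp_nat mulnDl natrD. Qed.

Lemma redp_embp u : redp p (embp p u) = 0.
Proof. by rewrite rmorphMn -mulr_natr pchar_Zp // mulr0. Qed.

Lemma mulr_embp a u : a * embp p u = embp p (redp p a * u).
Proof.
by rewrite -[a]natr_Zp -[u]natr_Zp redp_nat -natrM !embp_nat -natrM mulnA.
Qed.

Lemma embp_mulr u a : embp p u * a = embp p (u * redp p a).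
Proof. by rewrite mulrC mulr_embp mulrC. Qed.

Lemma embp_eq0 u : (embp p u == 0) = (u == 0).
Proof.
rewrite -[u]natr_Zp embp_nat !Zp_natr_eq0 // mulnC expnS dvdn_pmul2l //.
exact: prime_gt0.
Qed.

End PrimeModulus.

Lemma nr_unit_of_rinv (R : nearring) (P : R -> Prop) :
  (forall x, P x -> exists2 y, nr_mul x y = nr_one R & P y) ->
  forall x, P x -> nr_unit x.
Proof.
move=> rinv x Px; have [y xy Py] := rinv x Px; have [z yz _] := rinv y Py.
have xz : x = z by rewrite -[x]nr_mulr1 -yz nr_mulA xy nr_mul1r.
by exists y; rewrite -xz in yz.
Qed.

Section Construction.

Variables (p : nat) (t : 'Z_p) (k : nat).
Hypotheses (p_pr : prime p) (assoc_cond : t = 0 \/ k = 1%N).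

Local Notation V := ('Z_(p ^ 2) * 'Z_p)%type.

Definition tk_mul (x y : V) : V :=
  (x.1 * y.1 + embp p (t * x.2 * y.2), x.2 * redp p y.1 + redp p x.1 ^+ k * y.2).

Lemma tk_mulA : associative tk_mul.
Proof.
move=> [a b] [c d] [e f]; rewrite /tk_mul /=; congr (_, _); last first.
  by rewrite !rmorphD !rmorphM /= !redp_embp // !addr0 exprMn; ring.
rewrite mulrDr mulrDl mulr_embp // embp_mulr // mulrA -!addrA -!embpD //.
congr (_ + embp p _); case: assoc_cond => [-> | ->]; first by ring.
by rewrite !expr1; ring.
Qed.

Lemma tk_mulDr x : {morph tk_mul x : y z / y + z}.
Proof.
case: x => a b [c d] [e f]; rewrite /tk_mul /=; congr (_, _) => /=.
  by rewrite mulrDr [t * b * _]mulrDr embpD //; ring.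
by rewrite rmorphD /=; ring.
Qed.

Lemma tk_mul1r : left_id (1, 0) tk_mul.
Proof.
case=> c d; rewrite /tk_mul /= rmorph1 expr1n.
by rewrite !(mul1r, mulr0, mul0r) embp0 addr0 add0r.
Qed.

Lemma tk_mulr1 : right_id (1, 0) tk_mul.
Proof. by case=> a b; rewrite /tk_mul /= rmorph1 !mulr1 !mulr0 embp0 !addr0. Qed.

Lemma redp_tk_mul x y : redp p (tk_mul x y).1 = redp p x.1 * redp p y.1.
Proof. by rewrite rmorphD rmorphM /= redp_embp // addr0. Qed.

Lemma tk_mul_eq0 x y : redp p x.1 != 0 -> tk_mul x y = 0 -> y = 0.
Proof.
case: x y => a b [c d] /= ra_neq0 xy0.
have /= ac0 := congr1 fst xy0; have /= bd0 := congr1 snd xy0.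
have ra_unit : redp p a \is a GRing.unit by exact: Zp_unit.
have rc0 : redp p c = 0.
  apply: (mulrI ra_unit); rewrite mulr0.
  by have := redp_tk_mul (a, b) (c, d); rewrite xy0 /= rmorph0.
have d0 : d = 0.
  by apply: (mulrI (unitrX k ra_unit)); rewrite mulr0 -bd0 rc0 mulr0 add0r.
have c0 : c = 0.
  by apply: (mulrI (redp_unit p_pr ra_neq0)); rewrite mulr0 -ac0 d0 mulr0 embp0 addr0.
by rewrite c0 d0.
Qed.

Lemma tk_mul_inj x : redp p x.1 != 0 -> injective (tk_mul x).
Proof.
move=> ra_neq0 y z xy_xz; apply/eqP; rewrite -subr_eq0; apply/eqP.
apply: (tk_mul_eq0 ra_neq0); apply: (addIr (tk_mul x z)).
by rewrite -tk_mulDr subrK add0r.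
Qed.

Definition tk_nearring : nearring :=
  @NearRing V +%R 0 -%R tk_mul (1, 0)
    (@addrA V) (@add0r V) (@addr0 V) (@addNr V) (@addrN V)
    tk_mulA tk_mul1r tk_mulr1 tk_mulDr.

Lemma tk_nearring_additive_iso : nr_additive_iso tk_nearring (Cp2xCp p).
Proof. by exists id; split=> //; exists id. Qed.

Lemma tk_nearring_muln (x : tk_nearring) n : nr_muln x n = x *+ n.
Proof. by elim: n => //= n ->; rewrite mulrS. Qed.

Lemma tk_mul_eq1 x y : tk_mul x y = (1, 0) -> redp p x.1 * redp p y.1 = 1.
Proof. by move=> xy1; rewrite -redp_tk_mul xy1 /= rmorph1. Qed.

Lemma tk_nearring_unitP (x : tk_nearring) : nr_unit x <-> redp p x.1 != 0.
Proof.
have neq0_of_eq1 u v : u * v = 1 :> 'Z_p -> (u != 0) && (v != 0).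
  move=> uv1; apply/andP; split; apply/eqP => uv0; move/eqP: uv1;
    by rewrite uv0 ?mul0r ?mulr0 eq_sym oner_eq0.
split=> [[y [xy _]] | ]; first by have /andP[] := neq0_of_eq1 _ _ (tk_mul_eq1 xy).
apply: (@nr_unit_of_rinv tk_nearring (fun x => redp p x.1 != 0)) => {}x rx_neq0.
have [g _ gx] := injF_bij (tk_mul_inj rx_neq0).
exists (g (1, 0)); first exact: gx.
by have /andP[] := neq0_of_eq1 _ _ (tk_mul_eq1 (gx (1, 0))).
Qed.

Lemma tk_nearring_local : nr_local tk_nearring.
Proof.
have nonunitE (x : tk_nearring) : ~ nr_unit x <-> redp p x.1 = 0.
  by rewrite tk_nearring_unitP; split=> [/negP/negbNE/eqP | ->] //; rewrite eqxx.
split.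
- by apply/nonunitE; rewrite rmorph0.
- move=> x y /nonunitE rx0 /nonunitE ry0; apply/nonunitE.
  by rewrite /= rmorphD /= rx0 ry0 addr0.
- by move=> x /nonunitE rx0; apply/nonunitE; rewrite /= rmorphN /= rx0 oppr0.
Qed.

Lemma pair_mulrn (x : V) n : x *+ n = (x.1 *+ n, x.2 *+ n).
Proof. by rewrite [LHS]surjective_pairing !raddfMn. Qed.

Lemma redp_pair_torsion (x : V) : x *+ p = 0 -> redp p x.1 = 0.
Proof. by rewrite pair_mulrn => /(congr1 fst) /redp_torsion; apply. Qed.

Lemma embp_pair_muln u : exists z : V, (embp p u, 0) = z *+ p.
Proof. by exists ((u : nat)%:R, 0); rewrite pair_mulrn /= mul0rn. Qed.

Lemma nr_one_muln n : (1, 0) *+ n = (n%:R, 0) :> V.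
Proof. by rewrite pair_mulrn /= mul0rn. Qed.

Lemma tk_nearring_zero_symmetric : (0 < k)%N -> zero_symmetric tk_nearring.
Proof.
move=> k_gt0 [c d]; rewrite /= /tk_mul /= rmorph0 expr0n eqn0Ngt k_gt0 /=.
by rewrite !(mul0r, mulr0) embp0 !addr0.
Qed.

Lemma tk_nearring_not_zero_symmetric : k = 0%N -> ~ zero_symmetric tk_nearring.
Proof.
move=> k0 /(_ (0, 1)) /(congr1 snd) /=.
by rewrite k0 expr0 mul0r add0r mulr1 => /eqP; rewrite oner_eq0.
Qed.

Lemma tk_nearring_torsion_product_neq0 : t != 0 -> torsion_product_neq0 tk_nearring p.
Proof.
move=> t_neq0; exists (0, 1), (0, 1).
rewrite tk_nearring_muln pair_mulrn /= mul0rn pchar_Zp ?prime_gt1 //.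
split=> // /(congr1 fst) /=; rewrite mul0r add0r !mulr1.
by apply/eqP; rewrite embp_eq0.
Qed.

Lemma tk_nearring_no_torsion_product :
  t = 0 -> (0 < k)%N -> ~ torsion_product_neq0 tk_nearring p.
Proof.
move=> t0 k_gt0 [[a b] [[c d] []]]; rewrite !tk_nearring_muln.
move=> /redp_pair_torsion /= ra0 /redp_pair_torsion /= rc0; apply.
have [u ->] := redp_eq0 p_pr ra0.
rewrite /= /tk_mul /= embp_mulr // redp_embp // rc0 t0 expr0n eqn0Ngt k_gt0 /=.
by rewrite !(mul0r, mulr0) embp0 !addr0.
Qed.

Lemma tk_nearring_torsion_pow_action : torsion_pow_action tk_nearring p k.
Proof.
move=> n [c d]; rewrite !tk_nearring_muln => /redp_pair_torsion /= rc0.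
rewrite /= nr_one_muln pair_mulrn /tk_mul /= !(mulr0, mul0r) embp0 addr0 add0r.
rewrite redp_nat -natrX !mulr_natl.
rewrite -[_ - _]/(c *+ n - c *+ n ^ k, d *+ n ^ k - d *+ n ^ k) subrr.
have /(redp_eq0 p_pr) [u ->] : redp p (c *+ n - c *+ n ^ k) = 0.
  by rewrite rmorphB !rmorphMn /= rc0 !mul0rn subr0.
by have [z uz] := embp_pair_muln u; exists z; rewrite tk_nearring_muln.
Qed.

Lemma tk_nearring_not_torsion_pow_action j n :
  (n ^ j)%:R != (n ^ k)%:R :> 'Z_p -> ~ torsion_pow_action tk_nearring p j.
Proof.
move=> njk /(_ n (0, 1)) [].
  by rewrite tk_nearring_muln pair_mulrn /= mul0rn pchar_Zp ?prime_gt1.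
move=> z; rewrite !tk_nearring_muln /= nr_one_muln => /(congr1 snd) /=.
rewrite !pair_mulrn /= -[z.2 *+ p]mulr_natr pchar_Zp ?prime_gt1 //.
rewrite !(mul0r, mulr0) add0r mulr1.
by rewrite redp_nat -natrX => /eqP; rewrite subr_eq0 eq_sym (negPf njk).
Qed.

End Construction.

Lemma finField_expr_neq (F : finFieldType) k j :
  (0 < k < j)%N -> (j < #|F|)%N -> exists x : F, x ^+ k != x ^+ j.
Proof.
case/andP=> k_gt0 lt_kj lt_jF.
have [x | same_pow] := pickP (fun x : F => x ^+ k != x ^+ j); first by exists x.
have m_gt0 : (0 < j - k)%N by rewrite subn_gt0.
have all_roots : all (j - k).-unity_root (enum (predC1 (0 : F))).
  apply/allP => x; rewrite mem_enum /= => x_neq0; rewrite unity_rootE.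
  have xjE : x ^+ j = x ^+ k * x ^+ (j - k) by rewrite -exprD subnKC // ltnW.
  have /negbFE/eqP := same_pow x; rewrite xjE -{1}[x ^+ k]mulr1.
  by move/(mulfI (expf_neq0 k x_neq0)) <-.
have := max_unity_roots m_gt0 all_roots (enum_uniq _).
rewrite -cardE cardC1 => roots_bound; exfalso.
by move: roots_bound lt_jF; case: #|F| => //= n; lia.
Qed.

Lemma Zp_natr_expr_neq p k j :
  prime p -> (0 < k < j)%N -> (j < p)%N -> exists n, (n ^ k)%:R != (n ^ j)%:R :> 'Z_p.
Proof.
move=> p_pr lt_0kj lt_jp.
have [x] : exists x : 'F_p, x ^+ k != x ^+ j.
  by apply: finField_expr_neq; rewrite ?card_Fp.
rewrite -[x]natr_Zp -!natrX -val_eqE /= !val_Fp_nat // => neq_kj.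
by exists x; rewrite -val_eqE /= !val_Zp_nat ?prime_gt1.
Qed.

Section Family.

Variables (p : nat) (p_pr : prime p).

Definition family_t (i : 'I_p.+1) : 'Z_p := (i == p :> nat)%:R.
Definition family_k (i : 'I_p.+1) : nat := if i == p :> nat then 1%N else i.

Lemma family_assoc_cond i : family_t i = 0 \/ family_k i = 1%N.
Proof. by rewrite /family_t /family_k; case: eqP; [right | left]. Qed.

Definition family (i : 'I_p.+1) : nearring := tk_nearring p_pr (family_assoc_cond i).

Lemma family_lt_not_isomorphic (i j : 'I_p.+1) :
  (i < j)%N -> ~ nr_isomorphic (family i) (family j).
Proof.
move=> lt_ij iso_ij; have lt_ip : (i < p)%N by rewrite (leq_trans lt_ij) // -ltnS.
have ti : family_t i = 0 by rewrite /family_t ltn_eqF.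
have ki : family_k i = i by rewrite /family_k ltn_eqF.
have [i0 | i_gt0] := posnP i.
  apply: (tk_nearring_not_zero_symmetric (assoc_cond := family_assoc_cond i)).
    by rewrite ki.
  apply/(zero_symmetric_iso (nr_isomorphic_sym iso_ij))/tk_nearring_zero_symmetric.
  by rewrite /family_k; case: eqP; rewrite // (leq_ltn_trans _ lt_ij).
have [lt_jp | ge_jp] := ltnP j p.
  have [n neq_ij] : exists n, (n ^ i)%:R != (n ^ j)%:R :> 'Z_p.
    by apply: Zp_natr_expr_neq; rewrite ?i_gt0.
  have kj : family_k j = j by rewrite /family_k ltn_eqF.
  apply: (tk_nearring_not_torsion_pow_action
           (assoc_cond := family_assoc_cond j) (j := i) (n := n)); first by rewrite kj.
  by rewrite -ki; apply/(torsion_pow_action_iso iso_ij)/tk_nearring_torsion_pow_action.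
have tj : family_t j = 1 by rewrite /family_t eqn_leq ge_jp -ltnS ltn_ord.
apply: (tk_nearring_no_torsion_product (assoc_cond := family_assoc_cond i) ti).
  by rewrite ki.
apply/(torsion_product_neq0_iso (nr_isomorphic_sym iso_ij)).
apply: tk_nearring_torsion_product_neq0.
by rewrite tj oner_neq0.
Qed.

End Family.

Theorem theorem3 (p : nat) (hp : prime p) :
  exists F : 'I_p.+1 -> nearring,
    (forall i, nr_local (F i) /\ nr_additive_iso (F i) (Cp2xCp p)) /\
    (forall i j, i != j -> ~ nr_isomorphic (F i) (F j)).
Proof.
exists (family hp); split=> [i | i j neq_ij iso_ij].
  by split; [exact: tk_nearring_local | exact: tk_nearring_additive_iso].
case: (ltngtP i j) => [lt_ij | lt_ji | /val_inj eq_ij].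
- exact: family_lt_not_isomorphic lt_ij iso_ij.
- exact: family_lt_not_isomorphic lt_ji (nr_isomorphic_sym iso_ij).
- by rewrite eq_ij eqxx in neq_ij.
Qed.
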